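(* Let $\alpha=3/4$. Every point $(x,y)\in[0,1]^2$ with $x+y=4/3$ satisfies $G_{3/4}(x,y)=(y,x)$, so each such point other than the fixed point $(2/3,2/3)$ is periodic with period $2$. Moreover, every point of $[0,1]^2$ other than $(0,0)$ is either periodic (with period $1$ or $2$), or eventually periodic, or its orbit is attracted to the line $x+y=4/3$, i.e. the distance from $G_{3/4}^n(x,y)$ to the line $\{x+y=4/3\}$ tends to $0$ as $n\to\infty$.
   Context: Let $\tau:[0,1]\to[0,1]$ be the symmetric tent map, $\tau(x)=2x$ for $0\le x<1/2$ and $\tau(x)=2-2x$ for $1/2\le x\le 1$. For $0<\alpha<1$ define $G_\alpha:[0,1]^2\to[0,1]^2$ by $G_\alpha(x,y)=(y,\tau(\alpha y+(1-\alpha)x))$. *)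

From Stdlib Require Import Reals Lra.
Open Scope R_scope.

Definition tau (x : R) : R := if Rlt_dec x (1/2) then 2 * x else 2 - 2 * x.

Definition G (alpha : R) (p : R * R) : R * R :=
  (snd p, tau (alpha * snd p + (1 - alpha) * fst p)).

Definition Giter (alpha : R) (n : nat) (p : R * R) : R * R :=
  Nat.iter n (G alpha) p.

Definition in_square (p : R * R) : Prop :=
  0 <= fst p <= 1 /\ 0 <= snd p <= 1.

Definition dist_line (p : R * R) : R :=
  Rabs (fst p + snd p - 4/3) / sqrt 2.

(* Let s = x + y - 4/3 be the signed offset from the line. On the right branch of
   the tent the map sends s to -s/2, and near the line only points slightly below
   it use the left branch, where |s| may grow by 5/2 once; a piecewise linear
   Lyapunov function giving those points extra weight contracts by 9/10 near the
   line. Away from (0,0) the quantity x + 2y at least doubles every two steps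
   while it is below 1, and from x + 2y >= 1 a finite case analysis over the
   branches of the tent shows that the orbit enters the region |s| <= 2/25 within
   nine steps. *)
From Stdlib Require Import Reals Lra Lia.
Open Scope R_scope.

Lemma tau_cases z :
  (z < 1/2 /\ tau z = 2 * z) \/ (1/2 <= z /\ tau z = 2 - 2 * z).
Proof. unfold tau; destruct (Rlt_dec z (1/2)); [left | right]; split; lra. Qed.

Lemma tau_in_unit z : 0 <= z <= 1 -> 0 <= tau z <= 1.
Proof. intros Hz; destruct (tau_cases z) as [[? ->] | [? ->]]; lra. Qed.

Lemma G_pair alpha x y :
  G alpha (x, y) = (y, tau (alpha * y + (1 - alpha) * x)).
Proof. reflexivity. Qed.

Lemma Giter_S alpha n p : Giter alpha (S n) p = Giter alpha n (G alpha p).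
Proof.
  unfold Giter; induction n as [| n IH]; [reflexivity |].
  simpl in *; now rewrite <- IH.
Qed.

Lemma Giter_add alpha n m p :
  Giter alpha (n + m) p = Giter alpha n (Giter alpha m p).
Proof.
  unfold Giter; induction n as [| n IH]; [reflexivity |].
  simpl; now rewrite IH.
Qed.

Lemma G_in_square alpha p :
  0 <= alpha <= 1 -> in_square p -> in_square (G alpha p).
Proof.
  destruct p as [x y]; unfold in_square; cbn [fst snd]; intros Ha [Hx Hy].
  split; [exact Hy |]; apply tau_in_unit.
  assert (0 <= alpha * y <= alpha) by (split; nra).
  assert (0 <= (1 - alpha) * x <= 1 - alpha) by (split; nra).
  cbn [fst snd]; lra.
Qed.

Lemma Giter_in_square alpha n p :
  0 <= alpha <= 1 -> in_square p -> in_square (Giter alpha n p).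
Proof.
  intros Ha Hp; induction n as [| n IH]; [exact Hp |].
  now apply G_in_square.
Qed.

Lemma G_on_line x y :
  in_square (x, y) -> x + y = 4/3 -> G (3/4) (x, y) = (y, x).
Proof.
  unfold in_square; cbn [fst snd]; intros Hs Hxy; rewrite G_pair.
  destruct (tau_cases (3/4 * y + (1 - 3/4) * x)) as [[? _] | [? ->]];
    [lra | f_equal; lra].
Qed.

Lemma period_two_on_line x y :
  in_square (x, y) -> x + y = 4/3 -> (x, y) <> (2/3, 2/3) ->
  G (3/4) (x, y) <> (x, y) /\ Giter (3/4) 2 (x, y) = (x, y).
Proof.
  intros Hs Hxy Hne; split.
  - rewrite G_on_line by assumption; intros [= Eyx _].
    apply Hne; f_equal; lra.
  - change (G (3/4) (G (3/4) (x, y)) = (x, y)).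
    rewrite G_on_line by assumption.
    apply G_on_line; [| lra].
    unfold in_square in *; cbn [fst snd] in *; tauto.
Qed.

Lemma Un_cv_0_geometric_bound (u : nat -> R) C r :
  0 <= r < 1 -> (forall n, 0 <= u n <= C * r ^ n) -> Un_cv u 0.
Proof.
  intros Hr Hu eps Heps.
  assert (HC : 0 <= C) by (specialize (Hu O); simpl in Hu; lra).
  destruct (pow_lt_1_zero r ltac:(rewrite Rabs_right; lra) (eps / (C + 1)))
    as [N HN]; [apply Rdiv_lt_0_compat; lra |].
  exists N; intros n Hn; specialize (HN n Hn); specialize (Hu n).
  rewrite Rabs_right in HN by (apply Rle_ge, pow_le; lra).
  assert (Heq : (C + 1) * (eps / (C + 1)) = eps) by (field; lra).
  unfold R_dist; rewrite Rminus_0_r, Rabs_right by lra.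
  assert (0 <= r ^ n) by (apply pow_le; lra).
  nra.
Qed.

Section Alpha34.

Local Notation F := (G (3/4)).
Local Notation Fiter := (Giter (3/4)).

Lemma Fiter_in_square n p : in_square p -> in_square (Fiter n p).
Proof. apply Giter_in_square; lra. Qed.

Definition gauge (p : R * R) : R := fst p + 2 * snd p.

Lemma gauge_pos p : in_square p -> p <> (0, 0) -> 0 < gauge p.
Proof.
  destruct p as [x y]; unfold in_square, gauge; cbn [fst snd]; intros Hs Hne.
  destruct (Rle_lt_dec (x + 2 * y) 0); [| assumption].
  exfalso; apply Hne; f_equal; lra.
Qed.

Lemma gauge_double p :
  in_square p -> gauge p < 1 -> gauge (F p) < 1 ->
  2 * gauge p <= gauge (Fiter 2 p).
Proof.
  destruct p as [x y]; unfold in_square, gauge; cbn [fst snd]; intros Hs H0.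
  change (Fiter 2 (x, y)) with (F (F (x, y))); rewrite !G_pair; cbn [fst snd].
  destruct (tau_cases (3/4 * y + (1 - 3/4) * x)) as [[? ->] | [? _]]; [| lra].
  intros H1.
  destruct (tau_cases (3/4 * (2 * (3/4 * y + (1 - 3/4) * x)) + (1 - 3/4) * y))
    as [[? ->] | [? _]]; lra.
Qed.

Lemma gauge_reaches_one_of_pow m p :
  in_square p -> 1 <= 2 ^ m * gauge p -> exists n, 1 <= gauge (Fiter n p).
Proof.
  revert p; induction m as [| m IH]; intros p Hs Hm.
  { exists O; simpl in *; lra. }
  destruct (Rle_lt_dec 1 (gauge p)) as [H0 | H0]; [now exists O |].
  destruct (Rle_lt_dec 1 (gauge (F p))) as [H1 | H1]; [now exists 1%nat |].
  destruct (IH (Fiter 2 p)) as [n Hn].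
  - now apply Fiter_in_square.
  - assert (0 < 2 ^ m) by (apply pow_lt; lra).
    pose proof (gauge_double p Hs H0 H1); simpl in Hm; nra.
  - exists (n + 2)%nat; now rewrite Giter_add.
Qed.

Lemma gauge_reaches_one p :
  in_square p -> p <> (0, 0) -> exists n, 1 <= gauge (Fiter n p).
Proof.
  intros Hs Hne; pose proof (gauge_pos p Hs Hne) as Hg.
  destruct (Pow_x_infinity 2 ltac:(rewrite Rabs_right; lra) (/ gauge p))
    as [m Hm].
  apply (gauge_reaches_one_of_pow m); [assumption |].
  specialize (Hm m (le_n m)).
  rewrite Rabs_right in Hm by (apply Rle_ge, pow_le; lra).
  apply Rle_trans with (/ gauge p * gauge p);
    [rewrite Rinv_l; lra | apply Rmult_le_compat_r; lra].
Qed.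

Definition excess (p : R * R) : R := fst p + snd p - 4/3.

Definition near_line (p : R * R) : Prop := -(2/25) <= excess p <= 2/25.

Definition reaches_near_line (k : nat) (p : R * R) : Prop :=
  exists n, (n <= k)%nat /\ near_line (Fiter n p).

Lemma reaches_near_line_now k p : near_line p -> reaches_near_line k p.
Proof. intros H; exists O; split; [lia | exact H]. Qed.

Lemma reaches_near_line_step k p :
  reaches_near_line k (F p) -> reaches_near_line (S k) p.
Proof.
  intros [n [Hn H]]; exists (S n); split; [lia |].
  now rewrite Giter_S.
Qed.

(* Depth-first search over the branches of the tent: either the current point is
   near the line, or we take one step, splitting on the branch of [tau]; [lra]
   closes every branch, including the ones made infeasible by the accumulated
   constraints. *)
Ltac search_near_line :=
  lazymatch goal with
  | |- reaches_near_line ?k (?x, ?y) =>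
    destruct (Rle_lt_dec (-(2/25)) (x + y - 4/3));
    destruct (Rle_lt_dec (x + y - 4/3) (2/25));
    [ apply reaches_near_line_now; unfold near_line, excess; cbn [fst snd]; lra
    | try (exfalso; lra); search_step k x y
    | try (exfalso; lra); search_step k x y
    | try (exfalso; lra); search_step k x y ]
  end
with search_step k x y :=
  lazymatch k with
  | O => exfalso; lra
  | S _ =>
    apply reaches_near_line_step; rewrite G_pair;
    destruct (tau_cases (3/4 * y + (1 - 3/4) * x)) as [[? Ht] | [? Ht]];
    rewrite Ht; clear Ht;
    let w := fresh "w" in
    match goal with |- reaches_near_line _ (_, ?t) => remember t as w end;
    search_near_line
  end.

Lemma reaches_near_line_in_nine x y :
  0 <= x <= 1 -> 0 <= y <= 1 -> 1 <= x + 2 * y -> reaches_near_line 9 (x, y).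
Proof. intros; search_near_line. Qed.

Lemma near_line_reached p :
  in_square p -> 1 <= gauge p -> exists n, near_line (Fiter n p).
Proof.
  destruct p as [x y]; unfold in_square, gauge; cbn [fst snd]; intros [Hx Hy] H.
  destruct (reaches_near_line_in_nine x y Hx Hy H) as [n [_ Hn]].
  now exists n.
Qed.

(* The test [x + 3y < 2] says that the next step uses the left, expanding branch
   of the tent; such points below the line carry the heavier weight. *)
Definition lyapunov (p : R * R) : R :=
  if Rle_lt_dec 0 (excess p) then excess p
  else if Rlt_le_dec (fst p + 3 * snd p) 2 then 125/81 * - excess p
  else 5/9 * - excess p.

Ltac case_lyapunov :=
  repeat match goal with
  | |- context [Rle_lt_dec ?a ?b] => destruct (Rle_lt_dec a b)
  | |- context [Rlt_le_dec ?a ?b] => destruct (Rlt_le_dec a b)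
  end.

Lemma lyapunov_ge_excess p : 5/9 * Rabs (excess p) <= lyapunov p.
Proof.
  unfold lyapunov; destruct (Rle_lt_dec 0 (excess p));
    [rewrite Rabs_right by lra | rewrite Rabs_left by lra];
    case_lyapunov; lra.
Qed.

Lemma lyapunov_near_line p : near_line p -> lyapunov p < 1/8.
Proof. unfold near_line, lyapunov; intros H; case_lyapunov; lra. Qed.

Lemma lyapunov_contract p :
  in_square p -> lyapunov p < 1/8 -> lyapunov (F p) <= 9/10 * lyapunov p.
Proof.
  destruct p as [x y]; unfold in_square; intros Hs.
  rewrite G_pair; unfold lyapunov, excess; cbn [fst snd] in *.
  destruct (tau_cases (3/4 * y + (1 - 3/4) * x)) as [[? ->] | [? ->]];
    case_lyapunov; lra.
Qed.

Lemma lyapunov_geometric_decay q n :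
  in_square q -> lyapunov q < 1/8 ->
  lyapunov (Fiter n q) < 1/8 /\ lyapunov (Fiter n q) <= (9/10) ^ n * lyapunov q.
Proof.
  intros Hs Hq; induction n as [| n [IH1 IH2]]; [simpl; lra |].
  pose proof (lyapunov_contract (Fiter n q) (Fiter_in_square n q Hs) IH1).
  pose proof (lyapunov_ge_excess (Fiter n q)).
  pose proof (Rabs_pos (excess (Fiter n q))).
  change (Fiter (S n) q) with (F (Fiter n q)); simpl; split; nra.
Qed.

Lemma dist_line_le_excess p : 0 <= dist_line p <= Rabs (excess p).
Proof.
  unfold dist_line; fold (excess p).
  pose proof (Rabs_pos (excess p)).
  assert (1 <= sqrt 2) by (rewrite <- sqrt_1; apply sqrt_le_1_alt; lra).
  assert (0 < / sqrt 2 <= 1).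
  { split; [apply Rinv_0_lt_compat; lra |].
    rewrite <- Rinv_1; apply Rinv_le_contravar; lra. }
  unfold Rdiv; split; nra.
Qed.

Lemma dist_line_cv q :
  in_square q -> near_line q -> Un_cv (fun n => dist_line (Fiter n q)) 0.
Proof.
  intros Hs Hq; pose proof (lyapunov_near_line q Hq) as Hv.
  apply (Un_cv_0_geometric_bound _ (9/5 * lyapunov q) (9/10)); [lra |].
  intros n; pose proof (dist_line_le_excess (Fiter n q)).
  pose proof (lyapunov_ge_excess (Fiter n q)).
  destruct (lyapunov_geometric_decay q n Hs Hv); lra.
Qed.

End Alpha34.

Theorem theorem5 :
  (forall x y : R, in_square (x, y) -> x + y = 4/3 ->
     G (3/4) (x, y) = (y, x) /\
     ((x, y) <> (2/3, 2/3) ->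
        G (3/4) (x, y) <> (x, y) /\ Giter (3/4) 2 (x, y) = (x, y)))
  /\
  (forall p : R * R, in_square p -> p <> (0, 0) ->
     (Giter (3/4) 1 p = p \/ Giter (3/4) 2 p = p)
     \/ (exists m k : nat, (1 <= k)%nat /\
           Giter (3/4) (m + k) p = Giter (3/4) m p)
     \/ Un_cv (fun n => dist_line (Giter (3/4) n p)) 0).
Proof.
  split.
  - intros x y Hs Hxy; split; [now apply G_on_line |].
    now apply period_two_on_line.
  - intros p Hs Hne; right; right.
    destruct (gauge_reaches_one p Hs Hne) as [n1 Hn1].
    pose proof (Fiter_in_square n1 p Hs) as Hs1.
    destruct (near_line_reached _ Hs1 Hn1) as [n2 Hn2].
    rewrite <- Giter_add in Hn2.
    apply CV_shift with (k := (n2 + n1)%nat).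
    apply (Un_cv_ext (fun n => dist_line (Giter (3/4) n (Giter (3/4) (n2 + n1) p)))).
    { intros n; now rewrite (Giter_add _ n). }
    apply dist_line_cv; [now apply Fiter_in_square | exact Hn2].
Qed.
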